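(* Let $n,d\in\mathbb{N}$. Let $\tilde Z=(\tilde Z_{j,k})_{j\in\{0,1\},k\in[n]}$ be a $2\times n$ array of i.i.d. random vectors, each uniformly distributed on $\{0,1\}^d$ (i.e. with i.i.d. $\mathrm{Ber}(1/2)$ coordinates), let $U=(U_1,\dots,U_n)$ be uniform on $\{0,1\}^n$ and independent of $\tilde Z$, and let $S_n=(Z_1,\dots,Z_n)$ with $Z_k=\tilde Z_{U_k,k}$. Call $i\in[d]$ a bad coordinate if $Z_k(i)=0$ for all $k\in[n]$, and let $B\in\{0,1\}^d$ be given by $B(i)=1$ iff $i$ is a bad coordinate, with $\|B\|_0$ the number of bad coordinates. Then $$H(U\mid B,\tilde Z)\le n\,\mathbb{E}\big[2^{-\|B\|_0}\big],$$ where entropy is measured in bits.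
   Context: $H(\cdot\mid\cdot)$ denotes conditional Shannon entropy (base-2 logarithm, so that $H(U)=n$). *)

From HB Require Import structures.
From mathcomp Require Import all_boot all_order all_algebra.
From mathcomp Require Import reals exp.
Set Implicit Arguments. Unset Strict Implicit. Unset Printing Implicit Defensive.
Import Order.TTheory GRing.Theory Num.Theory.
Local Open Scope ring_scope.

Definition log2 {R : realType} (x : R) : R := ln x / ln 2.

Definition unif_prob {R : realType} {Om : finType} (A : {set Om}) : R :=
  #|A|%:R / #|Om|%:R.

Definition unif_expect {R : realType} {Om : finType} (f : Om -> R) : R :=
  \sum_(w : Om) f w / #|Om|%:R.

(* Conditional Shannon entropy (bits) H(X | Y) of random variables X, Y
   defined on the uniform finite probability space Om:
   H(X|Y) = sum_{x,y} P(X=x,Y=y) log2 (P(Y=y) / P(X=x,Y=y))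
          = E[ log2 (P(Y = Y w) / P(X = X w, Y = Y w)) ]. *)
Definition cond_entropy {R : realType} {Om : finType} {TX TY : eqType}
    (X : Om -> TX) (Y : Om -> TY) : R :=
  unif_expect (fun w =>
    log2 (unif_prob [set w' | Y w' == Y w] /
          unif_prob [set w' | (X w' == X w) && (Y w' == Y w)])).

(* The sample space: (U, Ztilde), with U uniform on {0,1}^n and
   Ztilde = (Ztilde_{j,k})_{j in {0,1}, k in [n]} i.i.d. uniform on {0,1}^d,
   independent of U.  The uniform measure on this product type is exactly
   this joint law. *)
Definition Omega (n d : nat) : finType :=
  ({ffun 'I_n -> bool} * {ffun bool * 'I_n -> {ffun 'I_d -> bool}})%type.

Definition Uv {n d} (w : Omega n d) : {ffun 'I_n -> bool} := w.1.
Definition Zt {n d} (w : Omega n d) : {ffun bool * 'I_n -> {ffun 'I_d -> bool}} := w.2.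

Definition Zk {n d} (w : Omega n d) (k : 'I_n) : {ffun 'I_d -> bool} :=
  Zt w (Uv w k, k).

Definition Bv {n d} (w : Omega n d) : {ffun 'I_d -> bool} :=
  [ffun i => [forall k : 'I_n, ~~ Zk w k i]].

Definition norm0 {d} (b : {ffun 'I_d -> bool}) : nat := #|[set i | b i]|.

(* Given (B, Z~), the vector U determines the whole sample, so H(U | B, Z~) is
   the mean of log2 of the size of the fibre of (B, Z~).  Call position k
   ambiguous when the unused vector Z~_{1-U_k,k} vanishes on every bad
   coordinate; any U' in the fibre agrees with U off the ambiguous positions,
   so the log-fibre size is at most the number of ambiguous positions.  The
   unused vector is uniform and independent of B: XORing it with any g in
   {0,1}^d is a measure-preserving bijection that fixes B.  Averaging over g,
   position k is ambiguous with probability E[2^(-||B||_0)]. *)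
From HB Require Import structures.
From mathcomp Require Import all_boot all_order all_algebra.
From mathcomp Require Import reals exp.
Import Order.TTheory GRing.Theory Num.Theory.
Local Open Scope ring_scope.

Lemma card_ffun_pointwise {aT rT : finType} (F : aT -> pred rT) :
  #|[set f : {ffun aT -> rT} | [forall x, f x \in F x]]| = (\prod_x #|F x|)%N.
Proof.
transitivity #|(family F : simpl_pred {ffun aT -> rT})|.
  by apply: eq_card => f; rewrite !inE.
by rewrite card_family foldrE big_map big_enum.
Qed.

Lemma card_bool_eq_if (c a : bool) :
  #|[pred y : bool | c ==> (y == a)]| = if c then 1%N else 2%N.
Proof.
case: c => /=; last by rewrite -card_bool; apply: eq_card.
by rewrite -(card1 a); apply: eq_card => y; rewrite !inE.
Qed.

Lemma card_ffun_bool_eq_on {T : finType} (A : {set T}) (a : T -> bool) :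
  #|[set g : {ffun T -> bool} | [forall i in A, g i == a i]]| = (2 ^ #|~: A|)%N.
Proof.
have -> : [set g : {ffun T -> bool} | [forall i in A, g i == a i]] =
    [set g : {ffun T -> bool} | [forall i, g i \in [pred y : bool | (i \in A) ==> (y == a i)]]].
  by apply/setP => g; rewrite !inE.
rewrite (card_ffun_pointwise (fun i => [pred y : bool | (i \in A) ==> (y == a i)]))
  (eq_bigr _ (fun i _ => card_bool_eq_if _ _)).
rewrite (bigID (mem A)) /= big1 ?mul1n => [|i ->//].
rewrite (eq_bigr (fun _ => 2%N)) => [|i /negbTE->//].
by rewrite prod_nat_const; apply/congr1/eq_card => i; rewrite !inE.
Qed.

Lemma sumr_indicator {R : pzSemiRingType} (I : finType) (P : pred I) :
  \sum_i (P i)%:R = #|[set i | P i]|%:R :> R.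
Proof.
rewrite -sum1dep_card natr_sum [RHS]big_mkcond /=.
by apply: eq_bigr => i _; case: (P i).
Qed.

Lemma sum_bij_family {R : pzSemiRingType} {Om G : finType}
    (phi : G -> Om -> Om) (f : Om -> R) :
  (forall g, bijective (phi g)) ->
  #|G|%:R * \sum_w f w = \sum_w \sum_g f (phi g w).
Proof.
move=> phi_bij; rewrite exchange_big /= -sumr_const mulr_suml.
by apply: eq_bigr => g _; rewrite mul1r (reindex (phi g)) //; apply/onW_bij/phi_bij.
Qed.

Lemma natr_exp2_cardsC {R : numFieldType} {T : finType} (A : {set T}) :
  (2 ^ #|~: A|)%:R = (2 ^ #|T|)%:R * (2%:R^-1) ^+ #|A| :> R.
Proof.
rewrite -(cardsC A) expnD natrM !natrX mulrAC -exprMn mulfV ?pnatr_eq0 //.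
by rewrite expr1n mul1r.
Qed.

Section UniformExpectation.
Context {R : realType}.

Lemma log2_natr_le (N m : nat) :
  (0 < N)%N -> (N <= 2 ^ m)%N -> log2 (N%:R : R) <= m%:R.
Proof.
move=> N_gt0 N_le.
have ln2_gt0 : 0 < ln (2%:R : R) by rewrite ln_gt0 // ltr1n.
rewrite /log2 ler_pdivrMr // mulr_natl -lnXn ?ltr0n //.
by rewrite ler_ln ?posrE ?ltr0n ?exprn_gt0 ?ltr0n // -natrX ler_nat.
Qed.

Context {Om : finType}.

Lemma le_unif_expect (f g : Om -> R) :
  (forall w, f w <= g w) -> unif_expect f <= unif_expect g.
Proof.
move=> le_fg; apply: ler_sum => w _.
by apply: ler_wpM2r; [rewrite invr_ge0 ler0n | exact: le_fg].
Qed.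

Lemma unif_expect_sum {I : finType} (f : I -> Om -> R) :
  unif_expect (fun w => \sum_i f i w) = \sum_i unif_expect (f i).
Proof.
by rewrite /unif_expect exchange_big /=; apply: eq_bigr => w _; rewrite mulr_suml.
Qed.

Lemma cond_entropy_injective {TX TY : eqType} (X : Om -> TX) (Y : Om -> TY) :
  injective (fun w => (X w, Y w)) ->
  cond_entropy X Y =
  unif_expect (fun w => log2 (#|[set w' | Y w' == Y w]|%:R : R)).
Proof.
move=> XY_inj; apply: eq_bigr => w _; congr (log2 _ / _).
have -> : [set w' | (X w' == X w) && (Y w' == Y w)] = [set w].
  apply/setP => w'; rewrite !inE; apply/andP/eqP => [[/eqP Xw /eqP Yw] | ->] //.
  by apply: XY_inj; rewrite /= Xw Yw.
have Om_neq0 : #|Om|%:R != 0 :> R by rewrite pnatr_eq0 -lt0n; apply/card_gt0P; exists w.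
by rewrite /unif_prob cards1 div1r invrK mulfVK.
Qed.

End UniformExpectation.


Section BadCoordinates.
Context {n d : nat}.
Implicit Types (w : Omega n d) (k : 'I_n) (g : {ffun 'I_d -> bool}).

(* Only at ambiguous positions can flipping [Uv w k] leave [Bv w] unchanged. *)
Definition ambiguous k w : bool :=
  [forall i, Bv w i ==> ~~ Zt w (~~ Uv w k, k) i].

Definition xor_unused k g w : Omega n d :=
  (Uv w, [ffun p => if p == (~~ Uv w k, k) then [ffun i => Zt w p i (+) g i]
                    else Zt w p]).

Lemma xor_unusedK k g : involutive (xor_unused k g).
Proof.
move=> [u z]; congr pair; apply/ffunP => p; rewrite !ffunE /=.
by case: eqP => // ->; apply/ffunP => i; rewrite !ffunE /= -addbA addbb addbF.
Qed.

Lemma Bv_xor_unused k g w : Bv (xor_unused k g w) = Bv w.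
Proof.
apply/ffunP => i; rewrite !ffunE; apply: eq_forallb => k'.
rewrite /Zk /= ffunE; case: eqP => // -[Uk eqk]; subst k'.
by move: Uk; case: (Uv w k).
Qed.

Lemma card_ambiguous_xor_unused k w :
  #|[set g | ambiguous k (xor_unused k g w)]| = (2 ^ #|~: [set i | Bv w i]|)%N.
Proof.
rewrite -(card_ffun_bool_eq_on _ (Zt w (~~ Uv w k, k))); apply: eq_card => g.
rewrite !inE /ambiguous Bv_xor_unused /= ffunE eqxx.
by apply: eq_forallb => i; rewrite !inE !ffunE; case: (g i); case: (Zt w _ i).
Qed.

Lemma expect_ambiguous (R : realType) k :
  unif_expect (fun w => (ambiguous k w)%:R) =
  unif_expect (fun w : Omega n d => (2%:R^-1) ^+ norm0 (Bv w)) :> R.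
Proof.
rewrite /unif_expect -!mulr_suml; congr (_ * _).
have card_g_neq0 : #|{ffun 'I_d -> bool}|%:R != 0 :> R.
  by rewrite card_ffun card_bool card_ord pnatr_eq0 expn_eq0.
apply: (mulfI card_g_neq0).
rewrite (sum_bij_family (fun g => xor_unused k g)); last first.
  by move=> g; apply: inv_bij; apply: xor_unusedK.
rewrite mulr_sumr; apply: eq_bigr => w _.
rewrite sumr_indicator card_ambiguous_xor_unused natr_exp2_cardsC.
by rewrite card_ffun card_bool card_ord.
Qed.

Lemma Uv_eq_of_unambiguous {w w' : Omega n d} :
  (Bv w', Zt w') = (Bv w, Zt w) -> forall k, ~~ ambiguous k w -> Uv w' k = Uv w k.
Proof.
case=> eqB eqZ k; apply: contraNeq => neqU; apply/forallP => i; apply/implyP.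
rewrite -eqB ffunE => /forallP /(_ k); rewrite /Zk eqZ.
by move: neqU; case: (Uv w' k); case: (Uv w k).
Qed.

Lemma card_fiber_le w :
  (#|[set w' | (Bv w', Zt w') == (Bv w, Zt w)]| <= 2 ^ #|[set k | ambiguous k w]|)%N.
Proof.
set F := [set w' | _].
have Uv_inj : {in F &, injective (@Uv n d)}.
  by move=> [u1 z1] [u2 z2]; rewrite !inE => /eqP[_ ->] /eqP[_ ->] /= ->.
rewrite -(card_in_imset Uv_inj) -(setCK [set k | ambiguous k w]).
rewrite -(card_ffun_bool_eq_on _ (Uv w)); apply: subset_leq_card.
apply/subsetP => _ /imsetP[w' + ->]; rewrite !inE => /eqP eqBZ.
by apply/forallP => k; apply/implyP; rewrite !inE => /(Uv_eq_of_unambiguous eqBZ) ->.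
Qed.

End BadCoordinates.

Theorem lemmaC3 (R : realType) (n d : nat) :
  cond_entropy (R := R) (@Uv n d) (fun w : Omega n d => (Bv w, Zt w))
  <= n%:R * unif_expect (fun w : Omega n d => (2%:R ^-1) ^+ norm0 (Bv w)).
Proof.
rewrite cond_entropy_injective; last by move=> [u1 z1] [u2 z2] [/= -> _ ->].
apply: (le_trans (y := unif_expect (fun w => \sum_k (ambiguous k w)%:R))).
  apply: le_unif_expect => w; rewrite sumr_indicator.
  apply: log2_natr_le; last exact: card_fiber_le.
  by apply/card_gt0P; exists w; rewrite inE.
rewrite unif_expect_sum (eq_bigr _ (fun k _ => expect_ambiguous R k)).
by rewrite sumr_const card_ord mulr_natl.
Qed.
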